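(* Let $H$ be a forest and $S\subseteq V(H)$ such that every leaf of $H$ lies in $S$ and every connected component of $H$ has at least two vertices. Then there is a set $F^*\subseteq V(H)$ with $|F^*\cap S|\ge \frac12|S|$ such that every connected component of $H[F^*]$ is a quasi-$S$-clean subdivided star.
   Context: All graphs are finite and simple. A subdivided star is a graph with at least two vertices obtained from a star $K_{1,m}$ ($m\ge1$) by replacing its edges with paths of arbitrary positive length; in particular every path with at least two vertices is a subdivided star. If a subdivided star has a vertex of degree at least 3, that vertex is its center. A subdivided star $T$ is quasi-$S$-clean if every leaf of $T$ lies in $S$ and $V(T)\cap S$ consists of the leaves of $T$ plus possibly one further vertex, which in case $T$ has a vertex of degree at least 3 must be that center vertex (when $T$ is a path, the further vertex may be any single internal vertex). *)

(* A finite simple graph is a symmetric irreflexive relation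
   e : rel T on a finType T. *)
From mathcomp Require Import all_boot.
Set Implicit Arguments. Unset Strict Implicit. Unset Printing Implicit Defensive.

Section Graphs.
Variable T : finType.

Definition erestr (e : rel T) (A : {set T}) : rel T :=
  [rel x y | [&& e x y, x \in A & y \in A]].

Definition has_cycle (e : rel T) : Prop :=
  exists p : seq T, [/\ 3 <= size p, uniq p & cycle e p].

Definition forest (e : rel T) : Prop := ~ has_cycle e.

Definition deg (e : rel T) (x : T) : nat := #|[set y | e x y]|.

Definition deg_in (e : rel T) (A : {set T}) (x : T) : nat := deg (erestr e A) x.

Definition leaf (e : rel T) (x : T) : bool := deg e x == 1.

Definition gcomp (e : rel T) (x : T) : {set T} := [set y | connect e x y].

Definition is_component_of_induced (e : rel T) (F C : {set T}) : Prop :=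
  exists2 x, x \in F & C = gcomp (erestr e F) x.

Definition is_tree_on (e : rel T) (C : {set T}) : Prop :=
  (forall x y, x \in C -> y \in C -> connect (erestr e C) x y) /\
  forest (erestr e C).

(* G[C] is a subdivided star: a tree with at least two vertices having a
   vertex c (the centre of the star K_{1,m} before subdivision) such that every
   other vertex has degree at most 2. *)
Definition subdivided_star (e : rel T) (C : {set T}) : Prop :=
  [/\ 2 <= #|C|, is_tree_on e C &
      exists2 c, c \in C & forall x, x \in C -> x != c -> deg_in e C x <= 2].

(* G[C] is quasi-S-clean: every leaf lies in S, and V(T) ∩ S consists of the
   leaves plus possibly one further vertex, which must be the centre (vertex of
   degree >= 3) when there is one (when G[C] is a path any single internal
   vertex is allowed; non-leaves of a tree with >= 2 vertices are internal). *)
Definition quasi_clean (e : rel T) (S C : {set T}) : Prop :=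
  [/\ (forall x, x \in C -> deg_in e C x = 1 -> x \in S),
      #|[set x in C :&: S | deg_in e C x != 1]| <= 1 &
      forall x, x \in C -> x \in S -> deg_in e C x != 1 ->
        (exists2 c, c \in C & 3 <= deg_in e C c) -> 3 <= deg_in e C x].

End Graphs.

From mathcomp Require Import all_boot zify.
From mathcomp Require Import boolp.
Set Implicit Arguments. Unset Strict Implicit. Unset Printing Implicit Defensive.

(* A vertex of H[A] is heavy if it has at least three neighbours in A, or lies in S
   and has at least two: exactly the vertices that cannot be non-central vertices of a
   quasi-S-clean subdivided star.  Call A admissible if H[A] has no isolated vertex and
   all its leaves lie in S.  By induction on |A|, every admissible A contains two
   disjoint star packings (sets whose components are quasi-S-clean subdivided stars)
   that together cover A ∩ S; the larger one is F*.

   Take a path of H[A] carrying as many heavy vertices as possible.  If it carries at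
   most one, c, then no other vertex of the component of c is heavy (when A has no heavy
   vertex at all, any c will do), so this component is a quasi-S-clean star centred at
   c; remove it.  Otherwise let c and z be its first two
   heavy vertices and y the successor of c.  By maximality, the branch P of c at the
   edge cy has no heavy vertex besides c, so it is again a quasi-S-clean star.  The light
   vertices strictly between c and z have degree two and lie outside S; removing them
   together with P leaves an admissible set which is joined to P only through z, so P
   can be added to whichever of its two packings avoids z. *)

Section InducedSubgraphs.
Variables (T : finType) (e : rel T).
Implicit Types (A B X Y : {set T}) (x y z : T) (s q : seq T).

Definition nbrs A x := [set y in A | e x y].

Definition upath A x s := [&& x \in A, uniq (x :: s) & path (erestr e A) x s].

Lemma in_nbrs A x y : (y \in nbrs A x) = (y \in A) && e x y.
Proof. by rewrite inE. Qed.

Lemma deg_in_nbrs A x : x \in A -> deg_in e A x = #|nbrs A x|.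
Proof. by move=> xA; apply: eq_card => y; rewrite !inE /erestr /= xA andbC. Qed.

Lemma deg0_gcomp x : deg e x = 0 -> gcomp e x = [set x].
Proof.
move/eqP; rewrite cards_eq0 => /eqP nx; apply/setP => y; rewrite !inE.
apply/idP/eqP=> [|->]; last exact: connect0.
case/connectP=> [[|z p] //= /andP [exz _] ->].
by have := in_set0 z; rewrite -nx inE exz.
Qed.

Lemma in_gcomp (E : rel T) c y : (y \in gcomp E c) = connect E c y.
Proof. by rewrite inE. Qed.

Lemma gcomp_step (E : rel T) c y z : y \in gcomp E c -> E y z -> z \in gcomp E c.
Proof. by rewrite !inE => cy /connect1; apply: connect_trans. Qed.

Lemma mem_path_erestr X x s : path (erestr e X) x s -> {subset s <= X}.
Proof.
elim: s x => [|y s IHs] x //= /andP [/and3P [_ _ yX] ys] z.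
by rewrite inE => /orP [/eqP -> // | /(IHs _ ys)].
Qed.

Lemma path_erestr X Y x s :
  path (erestr e X) x s -> {subset x :: s <= Y} -> path (erestr e Y) x s.
Proof.
elim: s x => [|y s IHs] x //= /andP [/and3P [exy _ _] ys] sY.
rewrite /erestr /= exy !sY ?mem_head ?(mem_head, inE, orbT) //=.
by apply: IHs => // z zs; apply: sY; rewrite inE zs orbT.
Qed.

Lemma erestr_path X x s : path (erestr e X) x s -> path e x s.
Proof. by apply: sub_path => a b /and3P []. Qed.

Lemma connect_erestrS X Y x y :
  X \subset Y -> connect (erestr e X) x y -> connect (erestr e Y) x y.
Proof.
move=> XY; apply: connect_sub => a b /and3P [eab aX bX]; apply: connect1.
by rewrite /erestr /= eab (subsetP XY _ aX) (subsetP XY _ bX).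
Qed.

Lemma gcomp_erestr_sub X c : c \in X -> gcomp (erestr e X) c \subset X.
Proof.
move=> cX; apply/subsetP => y; rewrite inE => /connectP [p pX ->].
case/lastP: p pX => [|p z] // /mem_path_erestr; apply.
by rewrite last_rcons mem_rcons mem_head.
Qed.

Lemma gcomp_erestr_nbr X c a b : c \in X ->
  a \in gcomp (erestr e X) c -> b \in X -> e a b -> b \in gcomp (erestr e X) c.
Proof.
move=> cX aC bX eab; apply: (gcomp_step aC).
by rewrite /erestr /= eab bX (subsetP (gcomp_erestr_sub cX)).
Qed.

Lemma connect_gcomp X c y :
  y \in gcomp (erestr e X) c -> connect (erestr e (gcomp (erestr e X) c)) c y.
Proof.
rewrite inE => /connectP [p cp ->]; apply/connectP; exists p => //.
by apply: (path_erestr cp) => z /(path_connect cp); rewrite inE.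
Qed.

Lemma gcomp_erestr_closed X Y x : X \subset Y ->
  (forall a b, a \in X -> b \in Y -> e a b -> b \in X) -> x \in X ->
  gcomp (erestr e Y) x = gcomp (erestr e X) x.
Proof.
move=> XY closedX xX; apply/setP => y; rewrite !inE; apply/idP/idP; last first.
  exact: connect_erestrS.
case/connectP=> p + ->; elim: p x xX => [|z p IHp] x xX /=; first by rewrite connect0.
case/andP=> /and3P [exz _ zY] zp; have zX := closedX x z xX zY exz.
by apply: connect_trans (connect1 _) (IHp z zX zp); rewrite /erestr /= exz xX.
Qed.

Lemma upath_of_connect X x y : connect (erestr e X) x y ->
  exists q, [/\ path (erestr e X) x q, uniq (x :: q) & last x q = y].
Proof. by case/connectP=> p /shortenP [q xq uq _ ->]; exists q. Qed.

Lemma upath_prefix A x s1 s2 : upath A x (s1 ++ s2) -> upath A x s1.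
Proof.
case/and3P=> xA; rewrite -cat_cons cat_uniq cat_path => /and3P [u _ _] /andP [p _].
by rewrite /upath xA u p.
Qed.

Lemma upath_suffix A x s s1 y s2 : upath A x s -> x :: s = s1 ++ y :: s2 -> upath A y s2.
Proof.
case/and3P=> xA u p; case: s1 => [[<- <-] | z s1 [_ Es]]; first by rewrite /upath xA u p.
rewrite Es in u p; rewrite /upath (mem_path_erestr p) ?(mem_cat, mem_head, orbT) //.
move: u; rewrite -cat_cons cat_uniq => /and3P [_ _ ->].
by move: p; rewrite cat_path => /andP [_ /= /andP [_ ->]].
Qed.

Lemma upath_head_setD1 A x y q : upath A x (y :: q) -> x \in A :\ y.
Proof.
case/and3P=> xA /andP [xyq _] _; rewrite in_setD1 xA andbT.
by apply: contraNneq xyq => ->; rewrite mem_head.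
Qed.

Lemma card_setD_lt A B x : x \in A -> x \in B -> #|A :\: B| < #|A|.
Proof.
move=> xA xB; rewrite -(cardsID B A) -add1n leq_add2r card_gt0.
by apply/set0Pn; exists x; rewrite inE xA xB.
Qed.

Lemma count_ends (a : pred T) x q : a x -> a (last x q) -> last x q != x ->
  1 < count a (x :: q).
Proof.
move=> ax al lx /=; rewrite ax add1n ltnS -has_count; apply/hasP; exists (last x q) => //.
by move: (mem_last x q); rewrite inE (negbTE lx).
Qed.

Hypothesis esym : symmetric e.

Lemma connect_erestr_sym X : connect_sym (erestr e X).
Proof.
apply: sym_connect_sym => x y.
by rewrite /erestr /= esym; case: (x \in X); case: (y \in X).
Qed.

Lemma gcomp_connected X c x y : x \in gcomp (erestr e X) c -> y \in gcomp (erestr e X) c ->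
  connect (erestr e (gcomp (erestr e X) c)) x y.
Proof.
move=> /connect_gcomp cx /connect_gcomp cy.
by apply: connect_trans cy; rewrite connect_erestr_sym.
Qed.

Hypothesis efor : forest e.

Lemma forest_erestr X : forest (erestr e X).
Proof.
case=> [[|x p] [lp up cp]] //; apply: efor; exists (x :: p); split => //.
exact: erestr_path cp.
Qed.

Lemma nbrs_disconnected A x y z : e x y -> e x z -> y != z ->
  ~~ connect (erestr e (A :\ x)) y z.
Proof.
move=> exy exz yz; apply/negP => /upath_of_connect [[|w q] [yq uq lq]].
  by rewrite -lq eqxx in yz.
have yA : y \in A :\ x by case/andP: yq => /and3P [].
have xq : x \notin y :: w :: q.
  apply/negP; rewrite inE => /orP [/eqP xy | /(mem_path_erestr yq)]; last by rewrite !inE eqxx.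
  by rewrite -xy !inE eqxx in yA.
apply: efor; exists (x :: y :: w :: q); split => //; first by rewrite cons_uniq xq.
rewrite /= exy rcons_path; move: (erestr_path yq) lq => /= /andP [-> ->] ->.
by rewrite esym.
Qed.

Lemma path_off_branch A c y q : upath A c (y :: q) ->
  {subset y :: q <= [predC gcomp (erestr e (A :\ y)) c]}.
Proof.
move=> cyq; have cAy := upath_head_setD1 cyq.
case/and3P: cyq => _ /andP [cyq yq] /= /andP [/and3P [ecy _ _] pq].
move=> w; rewrite in_cons => /predU1P [-> | wq]; rewrite inE.
  by apply/negP => /(subsetP (gcomp_erestr_sub cAy)); rewrite !inE eqxx.
case: q cyq yq pq wq => [|y1 q] // cyq /andP [yq _] /andP [/and3P [ey1 _ y1A] pq] wq.
have q_y : {subset y1 :: q <= A :\ y}.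
  move=> v vq; rewrite !inE; apply/andP; split; first by apply: contraNneq yq => <-.
  by move: vq; rewrite inE => /orP [/eqP -> // | /(mem_path_erestr pq)].
apply/negP; rewrite inE => cw.
have y1w := path_connect (path_erestr pq q_y) wq.
have cy1 : c != y1 by apply: contraNneq cyq => ->; rewrite !inE eqxx orbT.
move: (nbrs_disconnected A (etrans (esym _ _) ecy) ey1 cy1).
by rewrite (connect_trans cw) // connect_erestr_sym.
Qed.

End InducedSubgraphs.

Section StarPackings.
Variables (T : finType) (e : rel T) (S : {set T}).
Hypotheses (esym : symmetric e) (eirr : irreflexive e) (efor : forest e).
Implicit Types (A C F P X : {set T}) (x y z v w : T).
Local Notation nbrs := (nbrs e).
Local Notation upath := (upath e).

Definition heavy A x := (2 < #|nbrs A x|) || (x \in S) && (1 < #|nbrs A x|).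

Definition admissible A :=
  forall x, x \in A -> 0 < #|nbrs A x| /\ (#|nbrs A x| = 1 -> x \in S).

Definition clean_star C := subdivided_star e C /\ quasi_clean e S C.

Definition star_packing F := forall C, is_component_of_induced e F C -> clean_star C.

Definition two_star_packings A := exists F1 F2 : {set T},
  [/\ F1 \subset A, F2 \subset A, [disjoint F1 & F2], star_packing F1 /\ star_packing F2 &
      #|A :&: S| <= #|F1 :&: S| + #|F2 :&: S|].

Lemma heavy_nbrs_eq A X x : nbrs X x = nbrs A x -> heavy X x = heavy A x.
Proof. by rewrite /heavy => ->. Qed.

Lemma light_nbrs A x : admissible A -> x \in A -> ~~ heavy A x ->
  (#|nbrs A x| = 1 /\ x \in S) \/ (#|nbrs A x| = 2 /\ x \notin S).
Proof.
move=> admA xA; have [] := admA x xA; rewrite /heavy.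
case: #|nbrs A x| => [|[|[|n]]] //= _; first by move=> xS _; left; split=> //; apply: xS.
by rewrite andbT => _ ->; right.
Qed.

Lemma light_two_nbrs A x a b : ~~ heavy A x -> a \in nbrs A x -> b \in nbrs A x -> a != b ->
  nbrs A x = [set a; b] /\ x \notin S.
Proof.
rewrite /heavy negb_or -leqNgt => /andP [le2 nS] aN bN ab.
have sub : [set a; b] \subset nbrs A x by apply/subsetP => y; rewrite in_set2 => /orP [] /eqP ->.
have E : nbrs A x = [set a; b] by apply/eqP; rewrite eq_sym eqEcard sub cards2 ab.
by split=> //; apply: contra nS => ->; rewrite E cards2 ab.
Qed.

Lemma heavy_lose_one_nbr A X x : heavy A x -> #|nbrs A x| <= #|nbrs X x| + 1 ->
  0 < #|nbrs X x| /\ (#|nbrs X x| = 1 -> x \in S).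
Proof.
rewrite /heavy => hx le; split=> [|n1]; first by case/orP: hx => [|/andP [_]]; lia.
by case/orP: hx => [lt | /andP [] //]; exfalso; lia.
Qed.

Lemma admissible_clean_star P c : admissible P -> c \in P ->
  (forall x y, x \in P -> y \in P -> connect (erestr e P) x y) ->
  {in P, forall v, v != c -> ~~ heavy P v} -> clean_star P.
Proof.
move=> admP cP connP lightP.
have shape v : v \in P -> v != c ->
    (#|nbrs P v| = 1 /\ v \in S) \/ (#|nbrs P v| = 2 /\ v \notin S).
  by move=> vP vc; apply: light_nbrs (lightP v vP vc).
have centre x : x \in P -> x \in S -> #|nbrs P x| != 1 -> x = c.
  move=> xP xS; apply: contraNeq => xc.
  by case: (shape x xP xc) => [[-> //] | [_ nS]]; rewrite xS in nS.
have [y] : exists y, y \in nbrs P c by apply/card_gt0P; have [] := admP c cP.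
rewrite in_nbrs => /andP [yP ecy].
split; split.
- apply/card_gt1P; exists c, y; split=> //.
  by apply: contraTneq ecy => ->; rewrite eirr.
- by split=> //; apply: forest_erestr.
- exists c => // x xP xc; rewrite deg_in_nbrs //.
  by case: (shape x xP xc) => [[-> _] | [-> _]].
- by move=> x xP; rewrite deg_in_nbrs // => /(admP x xP).2.
- apply/card_le1_eqP => x x'; rewrite !inE.
  move=> /andP [/andP [xP xS]] + /andP [/andP [x'P x'S]].
  rewrite !deg_in_nbrs // => xd x'd.
  by rewrite (centre x xP xS xd) (centre x' x'P x'S x'd).
- move=> x xP xS; rewrite deg_in_nbrs // => xd [c' c'P]; rewrite deg_in_nbrs // => c'd.
  rewrite (centre x xP xS xd); suff -> : c = c' by [].
  apply/eqP; apply: contraTT c'd; rewrite eq_sym -leqNgt => c'c.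
  by case: (shape c' c'P c'c) => [[-> _] | [-> _]].
Qed.

Lemma star_packing0 : star_packing set0.
Proof. by move=> C [x]; rewrite inE. Qed.

Lemma star_packingU F P : star_packing F -> clean_star P ->
  (forall x y, x \in F -> y \in P -> ~~ e x y) -> star_packing (F :|: P).
Proof.
move=> pF sP noE C [x]; rewrite inE => /orP [xF | xP] ->.
  rewrite (gcomp_erestr_closed (subsetUl F P)) //; first by apply: pF; exists x.
  by move=> a b aF; rewrite inE => /orP [// | bP]; rewrite (negbTE (noE a b aF bP)).
have [[_ [connP _] _] _] := sP.
rewrite (gcomp_erestr_closed (subsetUr F P)) //; last first.
  by move=> a b aP; rewrite inE => /orP [bF | //]; rewrite esym (negbTE (noE b a bF aP)).
suff -> : gcomp (erestr e P) x = P by [].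
apply/setP => y; rewrite inE; apply/idP/idP => [xy | yP]; last exact: connP.
by apply: (subsetP (gcomp_erestr_sub e xP)); rewrite inE.
Qed.

Lemma two_star_packings0 : two_star_packings set0.
Proof.
exists set0, set0; rewrite set0I cards0 sub0set -setI_eq0 setI0.
by split=> //; split; apply: star_packing0.
Qed.

Lemma two_star_packings_extend A P A' a : P \subset A -> A' \subset A :\: P ->
  A :&: S \subset P :|: A' -> clean_star P ->
  (forall w v, w \in A' -> v \in P -> e w v -> w = a) ->
  two_star_packings A' -> two_star_packings A.
Proof.
move=> PA A'AP SPA' sP attach [F1 [F2 [F1A' F2A' F12 [pF1 pF2] cnt]]].
wlog aF1 : F1 F2 F1A' F2A' F12 pF1 pF2 cnt / a \notin F1.
  move=> wlog; case: (boolP (a \in F1)) => aF1; last exact: (wlog F1 F2).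
  apply: (wlog F2 F1); rewrite 1?disjoint_sym 1?addnC ?(disjointFr F12 aF1) //.
have A'A : A' \subset A := subset_trans A'AP (subsetDl A P).
have FP F : F \subset A' -> [disjoint F & P].
  by move=> FA'; rewrite disjoints_subset (subset_trans FA') // (subset_trans A'AP) // setDE subsetIr.
have cntA : #|A :&: S| <= #|P :&: S| + #|A' :&: S|.
  apply: leq_trans (leq_card_setU _ _); apply: subset_leq_card.
  by rewrite -setIUl subsetI SPA' subsetIr.
have cntF1P : #|(F1 :|: P) :&: S| = #|F1 :&: S| + #|P :&: S|.
  have F1P_S : [disjoint F1 :&: S & P :&: S].
    exact: disjointW (subsetIl _ _) (subsetIl _ _) (FP F1 F1A').
  by rewrite setIUl cardsU (disjoint_setI0 F1P_S) cards0 subn0.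
exists (F1 :|: P), F2; split.
- by rewrite subUset PA (subset_trans F1A' A'A).
- exact: subset_trans F2A' A'A.
- by rewrite disjoints_subset subUset -!disjoints_subset F12 disjoint_sym FP.
- split=> //; apply: star_packingU => // x y xF1 yP; apply/negP => exy.
  by move: aF1; rewrite -(attach x y (subsetP F1A' x xF1) yP exy) xF1.
- rewrite cntF1P; lia.
Qed.

Lemma reduce_component A c : admissible A -> c \in A ->
  {in gcomp (erestr e A) c, forall v, v != c -> ~~ heavy A v} ->
  (forall A', #|A'| < #|A| -> admissible A' -> two_star_packings A') ->
  two_star_packings A.
Proof.
move=> admA cA lightC IH; set C := gcomp (erestr e A) c.
have cC : c \in C by rewrite inE connect0.
have CA : C \subset A := gcomp_erestr_sub e cA.
have nbrsC v : v \in C -> nbrs C v = nbrs A v.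
  move=> vC; apply/setP => y; rewrite !in_nbrs; apply/andP/andP => [[yC evy] | [yA evy]].
    by rewrite (subsetP CA y yC).
  by rewrite (gcomp_erestr_nbr cA vC yA evy).
have outC w v : w \in A :\: C -> v \in C -> ~~ e w v.
  rewrite in_setD => /andP [wC wA] vC; apply: contra wC; rewrite esym.
  exact: gcomp_erestr_nbr cA vC wA.
have nbrs_rest w : w \in A :\: C -> nbrs (A :\: C) w = nbrs A w.
  move=> wA'; apply/setP => y; rewrite !in_nbrs in_setD.
  by case: (boolP (y \in C)) => yC //=; rewrite (negbTE (outC w y wA' yC)) andbF.
apply: (@two_star_packings_extend A C (A :\: C) c) => //.
- apply/subsetP => x; rewrite in_setI in_setU in_setD => /andP [xA _].
  by rewrite xA andbT orbN.
- apply: (@admissible_clean_star C c) => //.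
  + by move=> v vC; rewrite nbrsC //; apply: admA (subsetP CA v vC).
  + by move=> x y; apply: gcomp_connected.
  + by move=> v vC vc; rewrite (heavy_nbrs_eq (nbrsC v vC)) lightC.
- by move=> w v wA' vC ewv; case/negP: (outC w v wA' vC).
- apply: IH; first exact: card_setD_lt cA cC.
  move=> w wA'; rewrite nbrs_rest //; apply: admA.
  by move: wA'; rewrite in_setD => /andP [].
Qed.

Section Branch.
Variables (A : {set T}) (c z : T) (D : seq T).
Hypotheses (admA : admissible A) (heavy_c : heavy A c) (heavy_z : heavy A z).
Hypotheses (cDz : upath A c (rcons D z)) (lightD : ~~ has (heavy A) D).
Let y := head z D.
Let P := gcomp (erestr e (A :\ y)) c.
Hypothesis lightP : {in P, forall v, v != c -> ~~ heavy A v}.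
Let R := P :|: [set w in D].

Let Dz_split : rcons D z = y :: behead (rcons D z).
Proof. by rewrite /y; case: (D). Qed.

Let cyq : upath A c (y :: behead (rcons D z)).
Proof. by rewrite -Dz_split. Qed.

Let cA : c \in A. Proof. by case/and3P: cDz. Qed.
Let cAy : c \in A :\ y. Proof. exact: upath_head_setD1 cyq. Qed.
Let ecy : e c y. Proof. by case/and3P: cyq => _ _ /andP [/and3P []]. Qed.
Let cP : c \in P. Proof. by rewrite in_gcomp connect0. Qed.
Let PAy : P \subset A :\ y. Proof. exact: gcomp_erestr_sub. Qed.
Let PA : P \subset A. Proof. exact: subset_trans PAy (subsetDl _ _). Qed.

Let off_P w : w \in rcons D z -> w \notin P.
Proof.
rewrite Dz_split => wDz; have := path_off_branch esym efor cyq wDz.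
by rewrite inE.
Qed.

Let P_attach a b : a \in P -> b \in A -> e a b -> (b \in P) || (b == y).
Proof.
move=> aP bA eab; case: eqP => [_ | /eqP by_]; rewrite ?orbT ?orbF //.
by apply: gcomp_erestr_nbr cAy aP _ eab; rewrite in_setD1 by_ bA.
Qed.

Let nbrsP v : v \in P -> v != c -> nbrs P v = nbrs A v.
Proof.
move=> vP vc; apply/setP => b; rewrite !in_nbrs; apply/andP/andP => [[bP evb] | [bA evb]].
  by rewrite (subsetP PA b bP).
split=> //; case/orP: (P_attach vP bA evb) => // /eqP eby.
have eyc : e y c by rewrite esym.
have eyv : e y v by rewrite esym -eby.
have cv : c != v by rewrite eq_sym.
by move: (nbrs_disconnected esym efor A eyc eyv cv); rewrite -in_gcomp vP.
Qed.

Let nbrs_c : #|nbrs A c| <= #|nbrs P c| + 1.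
Proof.
rewrite -(cards1 y); apply: leq_trans (leq_card_setU _ _); apply: subset_leq_card.
apply/subsetP => b; rewrite in_setU in_set1 !in_nbrs => /andP [bA ecb].
by case/orP: (P_attach cP bA ecb) => [-> | ->]; rewrite ?ecb ?orbT.
Qed.

Let branch_clean_star : clean_star P.
Proof.
apply: (@admissible_clean_star P c) => //.
- move=> v vP; have [-> | vc] := eqVneq v c; first exact: heavy_lose_one_nbr heavy_c nbrs_c.
  by rewrite nbrsP //; apply: admA (subsetP PA v vP).
- by move=> v v'; apply: gcomp_connected.
- by move=> v vP vc; rewrite (heavy_nbrs_eq (nbrsP vP vc)) lightP.
Qed.

Let chain_nbrs d : d \in D -> d \notin S /\ {subset nbrs A d <= c :: rcons D z}.
Proof.
move=> dD; have lightd : ~~ heavy A d by apply: (hasPn lightD).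
have [D1 [D2 ED]] : exists D1 D2, D = D1 ++ d :: D2.
  by case/splitPr: dD => D1 D2; exists D1, D2.
have Ez : rcons D z = D1 ++ d :: rcons D2 z by rewrite ED rcons_cat.
have bD2 : head z D2 \in rcons D2 z by case: (D2) => [|b D2']; rewrite /= mem_head.
case/and3P: cDz => _; rewrite Ez -cat_cons cat_uniq cat_path.
case/and3P=> _ disj _ /andP [_ /= /andP [/and3P [ead aA _] pd]].
have /and3P [edb _ bA] : erestr e A d (head z D2) by case: (D2) pd => [|b D2'] /andP [].
have ab : last c D1 != head z D2.
  by apply: contraTneq (mem_last c D1) => ->; apply: (hasPn disj); rewrite inE bD2 orbT.
have aN : last c D1 \in nbrs A d by rewrite in_nbrs aA esym.
have bN : head z D2 \in nbrs A d by rewrite in_nbrs bA.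
have [Enb dS] := light_two_nbrs lightd aN bN ab.
split=> // w; rewrite Enb in_set2 => /orP [] /eqP ->.
  by rewrite -cat_cons mem_cat mem_last.
by rewrite inE mem_cat inE bD2 !orbT.
Qed.

Let zP : z \notin P.
Proof. by apply: off_P; rewrite mem_rcons mem_head. Qed.

Let connect_R w : w \in R -> connect (erestr e (A :\ z)) c w.
Proof.
rewrite in_setU => /orP [wP | ].
  apply: connect_erestrS (connect_gcomp wP); apply/subsetP => v vP.
  by rewrite in_setD1 (subsetP PA v vP) andbT; apply: contraNneq zP => <-.
rewrite inE => wD; case/and3P: cDz => _; rewrite -rcons_cons rcons_uniq rcons_path.
case/andP=> zcD _ /andP [pD _]; apply: (path_connect (path_erestr pD _)); last first.
  by rewrite inE wD orbT.
move=> v vcD; rewrite in_setD1; apply/andP; split; first by apply: contraNneq zcD => <-.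
by move: vcD; rewrite inE => /orP [/eqP -> // | /(mem_path_erestr pD)].
Qed.

Let nbrs_z_R : #|nbrs A z :&: R| <= 1.
Proof.
apply/card_le1_eqP => a b; rewrite !in_setI !in_nbrs.
move=> /andP [/andP [_ eza] aR] /andP [/andP [_ ezb] bR].
have [// | ab] := eqVneq a b; case/negP: (nbrs_disconnected esym efor A eza ezb ab).
by apply: connect_trans (connect_R bR); rewrite connect_erestr_sym // connect_R.
Qed.

Let edge_to_R w b : w \in A :\: R -> b \in R -> e w b -> w = z.
Proof.
rewrite in_setD in_setU negb_or => /andP [/andP [wP wD] wA].
rewrite in_setU => /orP [bP | bD] ewb.
  have /orP [|/eqP wy] := P_attach bP wA (etrans (esym b w) ewb).
    by rewrite (negbTE wP).
  by move: wD; rewrite wy /y; case: (D) => [|d D'] //; rewrite !inE eqxx.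
rewrite inE in bD; have := (chain_nbrs bD).2 w; rewrite in_nbrs wA esym ewb.
move=> /(_ isT); rewrite inE mem_rcons inE => /or3P [/eqP wc | /eqP -> // | wD'].
  by move: wP; rewrite wc cP.
by move: wD; rewrite inE wD'.
Qed.

Let rest_admissible : admissible (A :\: R).
Proof.
move=> w wA'; have wA : w \in A by move: wA'; rewrite in_setD => /andP [].
have [-> | wz] := eqVneq w z.
  apply: heavy_lose_one_nbr heavy_z _.
  apply: leq_trans (_ : _ <= #|nbrs (A :\: R) z :|: (nbrs A z :&: R)|) _.
    apply: subset_leq_card; apply/subsetP => b bN.
    rewrite in_setU in_setI bN /= in_nbrs in_setD.
    by case: (b \in R); rewrite //= orbF -in_nbrs.
  by apply: leq_trans (leq_card_setU _ _) _; rewrite leq_add2l nbrs_z_R.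
suff -> : nbrs (A :\: R) w = nbrs A w by apply: admA.
apply/setP => b; rewrite !in_nbrs in_setD; case: (boolP (b \in R)) => bR //=.
case: (boolP (e w b)) => ewb; last by rewrite andbF.
by rewrite (edge_to_R wA' bR ewb) eqxx in wz.
Qed.

Let S_cover : A :&: S \subset P :|: (A :\: R).
Proof.
apply/subsetP => w; rewrite /R in_setI in_setU !in_setD in_setU negb_or => /andP [wA wS].
rewrite wA andbT; case: (w \in P) => //=; rewrite inE.
by apply: contraTN wS => wD; apply: (chain_nbrs wD).1.
Qed.

Lemma reduce_branch :
  (forall A', #|A'| < #|A| -> admissible A' -> two_star_packings A') -> two_star_packings A.
Proof.
move=> IH; apply: (two_star_packings_extend PA _ S_cover branch_clean_star).
- by rewrite setDS // subsetUl.
- by move=> w v wA' vP; apply: (edge_to_R wA'); rewrite /R in_setU vP.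
- by apply: IH rest_admissible; apply: (card_setD_lt cA); rewrite /R in_setU cP.
Qed.

End Branch.

Lemma upath_heavy_ends A X v c : X \subset A -> v \in X ->
  heavy A v -> heavy A c -> v != c -> connect (erestr e X) v c ->
  exists q, [/\ upath A v q, last v q = c, {subset v :: q <= X} &
                1 < count (heavy A) (v :: q)].
Proof.
move=> XA vX hv hc vc /upath_of_connect [q [vq uq lq]].
have qX : {subset v :: q <= X}.
  by move=> w; rewrite inE => /orP [/eqP -> // | /(mem_path_erestr vq)].
exists q; split=> //; last by apply: count_ends; rewrite ?lq // eq_sym.
rewrite /upath (subsetP XA v vX) uq (path_erestr vq) // => w /qX.
exact: subsetP XA w.
Qed.

Lemma max_upath_branch_light A c y r : heavy A c -> upath A c (y :: r) ->
  (forall v q, upath A v q -> count (heavy A) (v :: q) <= count (heavy A) (c :: y :: r)) ->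
  {in gcomp (erestr e (A :\ y)) c, forall v, v != c -> ~~ heavy A v}.
Proof.
move=> hc cyr maxr v vP vc; apply/negP => hv.
have cAy := upath_head_setD1 cyr.
have PA : gcomp (erestr e (A :\ y)) c \subset A.
  exact: subset_trans (gcomp_erestr_sub e cAy) (subsetDl _ _).
have vc_conn : connect (erestr e (gcomp (erestr e (A :\ y)) c)) v c.
  by rewrite connect_erestr_sym //; apply: connect_gcomp.
have [q [vq lq qP cnt]] := upath_heavy_ends PA vP hv hc vc vc_conn.
have off := path_off_branch esym efor cyr.
have /maxr : upath A v (q ++ y :: r).
  have uyr : uniq (y :: r) by case/and3P: cyr => _ /andP [].
  have pyr : path (erestr e A) c (y :: r) by case/and3P: cyr.
  case/and3P: vq => vA uq pq.
  rewrite /upath vA -cat_cons cat_uniq uq uyr cat_path pq lq pyr !andbT.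
  by apply/hasPn => w /off; rewrite inE; apply: contra (qP w).
by move: cnt; rewrite -cat_cons count_cat /= hv hc; lia.
Qed.

Lemma max_heavy_upath A x : x \in A -> heavy A x ->
  exists c r, [/\ heavy A c, upath A c r &
    forall v q, upath A v q -> count (heavy A) (v :: q) <= count (heavy A) (c :: r)].
Proof.
move=> xA hx.
pose achieved m := `[< exists v q, upath A v q /\ count (heavy A) (v :: q) = m >].
have ach1 : achieved 1 by apply/asboolP; exists x, [::]; rewrite /upath xA /= hx.
have ub m : achieved m -> m <= #|T|.
  case/asboolP => v [q [/and3P [_ uq _] <-]]; apply: leq_trans (count_size _ _) _.
  by rewrite -(card_uniqP uq) max_card.
case: (ex_maxnP (ex_intro _ 1 ach1) ub) => _ /asboolP [v [q [vq <-]]] maxm.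
have hs : has (heavy A) (v :: q) by rewrite has_count (maxm 1 ach1).
have maxvq w t : upath A w t -> count (heavy A) (w :: t) <= count (heavy A) (v :: q).
  by move=> wt; apply: maxm; apply/asboolP; exists w, t.
have suffix s1 y s2 : v :: q = s1 ++ y :: s2 -> upath A y s2 := upath_suffix vq.
move: (v :: q) hs suffix maxvq => s; case/split_find=> c s1 s2 hc ls1 suffix maxvq.
have cnt1 : count (heavy A) s1 = 0 by apply/eqP; rewrite eqn0Ngt -has_count.
exists c, s2; split=> //; first exact: suffix _ _ _ (cat_rcons _ _ _).
by move=> w t /maxvq; rewrite cat_rcons count_cat cnt1.
Qed.

Theorem admissible_two_star_packings A : admissible A -> two_star_packings A.
Proof.
have [n] := ubnP #|A|; elim: n A => // n IHn A ltA admA.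
have IH A' : #|A'| < #|A| -> admissible A' -> two_star_packings A'.
  by move=> ltA'; apply: IHn; apply: leq_trans ltA' _.
have [-> | [x0 x0A]] := set_0Vmem A; first exact: two_star_packings0.
have [/exists_inP [x xA hx] | /exists_inPn light] := boolP [exists x in A, heavy A x].
  have [c [r [hc cr maxr]]] := max_heavy_upath xA hx.
  have cA : c \in A by case/and3P: cr.
  have [hr | lr] := boolP (has (heavy A) r).
    move: hr cr maxr; case/split_find=> z D r2 hz lD cr maxr.
    apply: (reduce_branch admA hc hz (upath_prefix cr) lD _ IH).
    have Er : rcons D z ++ r2 = head z D :: behead (rcons D z ++ r2) by case: (D).
    by rewrite Er in cr maxr; apply: max_upath_branch_light hc cr maxr.
  apply: (reduce_component admA cA _ IH) => v vC vc; apply/negP => hv.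
  have vA := subsetP (gcomp_erestr_sub e cA) v vC.
  have vc_conn : connect (erestr e A) v c by rewrite connect_erestr_sym // -in_gcomp.
  have [q [vq _ _ cnt]] := upath_heavy_ends (subxx A) vA hv hc vc vc_conn.
  have cnt0 : count (heavy A) r = 0 by apply/eqP; rewrite eqn0Ngt -has_count.
  by move: cnt (maxr v q vq); rewrite /= hc hv cnt0; lia.
apply: (reduce_component admA x0A _ IH) => v vC _; apply: light.
exact: subsetP (gcomp_erestr_sub e x0A) v vC.
Qed.

End StarPackings.

Theorem mainTheorem16 (T : finType) (e : rel T) (S : {set T}) :
  symmetric e -> irreflexive e ->
  forest e ->
  (forall x, leaf e x -> x \in S) ->
  (forall x, 2 <= #|gcomp e x|) ->
  exists F : {set T},
    #|S| <= 2 * #|F :&: S| /\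
    (forall C : {set T}, is_component_of_induced e F C ->
       subdivided_star e C /\ quasi_clean e S C).
Proof.
move=> esym eirr efor leafS comp2.
have degT x : #|nbrs e setT x| = deg e x by apply: eq_card => y; rewrite !inE.
have admT : admissible e S setT.
  move=> x _; rewrite degT; split=> [|d1]; last by apply: leafS; rewrite /leaf d1.
  by rewrite lt0n; apply: contraTneq (comp2 x) => /deg0_gcomp ->; rewrite cards1.
have [F1 [F2 [_ _ _ [pF1 pF2]]]] := admissible_two_star_packings esym eirr efor admT.
rewrite setTI => cnt.
have [le | lt] := leqP #|F2 :&: S| #|F1 :&: S|; [exists F1 | exists F2]; split=> //; lia.
Qed.
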